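(* Assume condition $(\star)$. Then, with $B^{\mathcal T}$ acting on $C^{\mathcal T}$ by right twisted convolution and $A^{\mathcal T}$ by left twisted convolution, $$\operatorname{End}_{A^{\mathcal T}}(C^{\mathcal T})=B^{\mathcal T},\qquad \operatorname{End}_{B^{\mathcal T}}(C^{\mathcal T})=A^{\mathcal T}.$$ Moreover $B^{\mathcal T}=1_\omega*A^{\mathcal T}*1_\omega$.
   Context: $\Bbbk$ is a field, $G$ a finite group, $\mathcal R$ a unital $\Bbbk$-algebra, free as a $\Bbbk$-module, with $G$ acting by $\Bbbk$-algebra automorphisms. For a finite $G$-set $Z$, $\mathcal R_G(Z)$ is the set of $G$-equivariant maps $Z\to\mathcal R$ ($f(gz)=g(f(z))$), $G$ acting diagonally on products. Let $(\Lambda,\omega)$ be a finite set with a distinguished element $\omega$; for each $\lambda\in\Lambda$ let $Y_\lambda$ be a finite $G$-set, $Y=\bigsqcup_\lambda Y_\lambda$, $X=Y_\omega$, and let $p_\lambda:X\to Y_\lambda$ be $G$-equivariant surjections with $p_\omega=\mathrm{id}$. Fix a twist $e\in\mathcal R_G(Y)$ (every $e(y)$ invertible). $A=\mathcal R_G(Y\times Y)$ with twisted convolution $(f*g)(x,y)=\sum_{z\in Y}f(x,z)e(z)^{-1}g(z,y)$ is a unital associative algebra; $A_{\lambda\mu}=\mathcal R_G(Y_\lambda\times Y_\mu)\subseteq A$ (extension by zero), $B=A_{\omega\omega}$, $C=\bigoplus_\lambda A_{\lambda\omega}$. Define: $S_\lambda\in A_{\omega\lambda}$, $S_\lambda(x,y)=\delta_{p_\lambda(x),y}e(y)$;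 $M_\lambda\in A_{\lambda\omega}$, $M_\lambda(y,x)=\delta_{y,p_\lambda(x)}e(y)$; $K_\lambda\in B$, $K_\lambda(x,x')=\delta_{p_\lambda(x),p_\lambda(x')}e(p_\lambda(x))$; $1_\lambda\in A_{\lambda\lambda}$, $1_\lambda(y,y')=\delta_{y,y'}e(y)$; $m\in\mathcal R_G(Y)$, $m(y)=\sum_{x\in p_\lambda^{-1}(y)}e(x)^{-1}e(y)$ for $y\in Y_\lambda$; for $t\in\mathcal R_G(X)$, $t_\omega\in B$, $t_\omega(x,x')=\delta_{x,x'}e(x)t(x)$. Let $\mathcal T\subseteq\mathcal R$ be a $G$-stable subring. Condition $(\star)$: for every $y\in Y$, $m(y)$ is invertible in $\mathcal R$ and $m(y),m(y)^{-1}\in\mathcal T$. $B^{\mathcal T}\subseteq B$ is the subalgebra generated by all $K_\lambda$ ($\lambda\in\Lambda$) and all $t_\omega$ with $t\in\mathcal R_G(X)$ taking values in $\mathcal T$; $A^{\mathcal T}\subseteq A$ is the subalgebra generated by $B^{\mathcal T}$ and all $S_\lambda,M_\lambda$; $C^{\mathcal T}=A^{\mathcal T}*1_\omega$, an $(A^{\mathcal T},B^{\mathcal T})$-bimodule. *)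

From HB Require Import structures.
From mathcomp Require Import all_boot all_order fingroup action all_algebra.
Set Implicit Arguments. Unset Strict Implicit. Unset Printing Implicit Defensive.
Import GRing.Theory.
Local Open Scope ring_scope.

Section TwistedConvolution.

Variables (k : fieldType) (R : algType k) (Y : finType).

(* elements of R^{Y x Y}; A = R_G(Y x Y) is the subset of equivariant ones *)
Definition mat := {ffun Y * Y -> R}.

(* einv y is the inverse e(y)^{-1} of the twist *)
Variable einv : Y -> R.

Definition tconv (f g : mat) : mat :=
  [ffun q => \sum_(z : Y) f (q.1, z) * einv z * g (z, q.2)].

Inductive gen (P : mat -> Prop) : mat -> Prop :=
| gen_base f : P f -> gen P f
| gen_zero : gen P 0
| gen_add f g : gen P f -> gen P g -> gen P (f + g)
| gen_scale (a : k) f : gen P f -> gen P (a *: f)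
| gen_mul f g : gen P f -> gen P g -> gen P (tconv f g).

(* Y = disjoint union of the Y_lambda, encoded by the label lab : Y -> Lambda;
   X = Y_omega = [pred y | lab y == omega];  p l restricted to X is p_l. *)
Variables (Lambda : finType) (omega : Lambda) (lab : Y -> Lambda).
Variables (p : Lambda -> Y -> Y) (e : Y -> R).

Definition inX (y : Y) : bool := lab y == omega.

Definition Sg (l : Lambda) : mat :=
  [ffun q => if inX q.1 && (p l q.1 == q.2) then e q.2 else 0].

Definition Mg (l : Lambda) : mat :=
  [ffun q => if inX q.2 && (q.1 == p l q.2) then e q.1 else 0].

Definition Kg (l : Lambda) : mat :=
  [ffun q => if [&& inX q.1, inX q.2 & p l q.1 == p l q.2]
             then e (p l q.1) else 0].

Definition oneL (l : Lambda) : mat :=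
  [ffun q => if (lab q.1 == l) && (q.1 == q.2) then e q.1 else 0].

Definition mfun (y : Y) : R :=
  \sum_(x : Y | inX x && (p (lab y) x == y)) einv x * e y.

Definition tdiag (t : Y -> R) : mat :=
  [ffun q => if inX q.1 && (q.1 == q.2) then e q.1 * t q.1 else 0].

Variables (gT : finGroupType) (toY : {action gT &-> Y}) (toR : {action gT &-> R}).
Variable T : {pred R}.

(* t : X -> R is G-equivariant and T-valued (only values on X matter) *)
Definition T_equivariant_on_X (t : Y -> R) : Prop :=
  (forall x, inX x -> t x \in T) /\
  (forall (g : gT) x, inX x -> t (toY x g) = toR (t x) g).

Definition BT : mat -> Prop :=
  gen (fun f => (exists l, f = Kg l) \/
                (exists2 t, T_equivariant_on_X t & f = tdiag t)).

Definition AT : mat -> Prop :=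
  gen (fun f => BT f \/ (exists l, f = Sg l) \/ (exists l, f = Mg l)).

Definition CT (c : mat) : Prop := exists2 a, AT a & c = tconv a (oneL omega).

End TwistedConvolution.

From Pilot Require Import Defs.
From HB Require Import structures.
From mathcomp Require Import all_boot all_order fingroup action all_algebra.
Set Implicit Arguments. Unset Strict Implicit. Unset Printing Implicit Defensive.
Import GRing.Theory.
Local Open Scope ring_scope.

(* The idempotents 1_l sum to the unit of A.  By induction on the generation
   of A^T, every corner 1_l * a * 1_m of an a in A^T has the form
   M_l * b * S_m with b in B^T: for products, split 1 = sum_n 1_n in the
   middle and use S_n * M_n = K_n in B^T.  For l = omega this gives
   1_omega * A^T * 1_omega = B^T.  Condition (star) provides
   D_l = ((m o p_l)^-1)_omega in B^T with M_l * D_l * S_l = 1_l, so every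
   c in C^T decomposes as sum_l M_l * (D_l * S_l * c) with D_l * S_l * c in
   B^T.  Hence an A^T-endomorphism phi of C^T is right convolution by
   phi(1_omega) in B^T, and a B^T-endomorphism phi is left convolution by
   sum_l phi(M_l) * D_l * S_l in A^T. *)

Lemma additive_on_sum (V : zmodType) (P : V -> Prop) (phi : V -> V) :
  P 0 -> (forall x y, P x -> P y -> P (x + y)) ->
  (forall x y, P x -> P y -> phi (x + y) = phi x + phi y) ->
  forall (I : Type) (r : seq I) (F : I -> V), (forall i, P (F i)) ->
  P (\sum_(i <- r) F i) /\ phi (\sum_(i <- r) F i) = \sum_(i <- r) phi (F i).
Proof.
move=> P0 PD phiD I r F PF; elim: r => [|i r [Psum phi_sum]]; last first.
  by rewrite !big_cons phiD // phi_sum; split => //; apply: PD.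
rewrite !big_nil; split => //.
by apply/(addrI (phi 0)); rewrite -phiD // !addr0.
Qed.

Section TwistedConvolution.

Variables (k : fieldType) (R : algType k) (Y : finType) (einv : Y -> R).

Local Notation conv := (tconv einv).

Lemma tconvA (f g h : mat R Y) : conv (conv f g) h = conv f (conv g h).
Proof.
apply/ffunP => -[x y]; rewrite !ffunE /=.
transitivity (\sum_z \sum_w f (x, w) * einv w * g (w, z) * einv z * h (z, y)).
  apply: eq_bigr => z _; rewrite ffunE /= !big_distrl; apply: eq_bigr => w _ /=.
  by rewrite ?mulrA.
rewrite exchange_big; apply: eq_bigr => w _; rewrite ffunE /= big_distrr.
by apply: eq_bigr => z _ /=; rewrite ?mulrA.
Qed.

Lemma tconvDl (f g h : mat R Y) : conv (f + g) h = conv f h + conv g h.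
Proof.
apply/ffunP => q; rewrite !ffunE -big_split; apply: eq_bigr => z _ /=.
by rewrite ffunE !mulrDl.
Qed.

Lemma tconvDr (f g h : mat R Y) : conv h (f + g) = conv h f + conv h g.
Proof.
apply/ffunP => q; rewrite !ffunE -big_split; apply: eq_bigr => z _ /=.
by rewrite ffunE mulrDr.
Qed.

Lemma tconv0l (h : mat R Y) : conv 0 h = 0.
Proof. by apply/ffunP => q; rewrite !ffunE big1 // => z _; rewrite ffunE !mul0r. Qed.

Lemma tconv0r (h : mat R Y) : conv h 0 = 0.
Proof. by apply/ffunP => q; rewrite !ffunE big1 // => z _; rewrite ffunE mulr0. Qed.

Lemma tconvZl (a : k) (f g : mat R Y) : conv (a *: f) g = a *: conv f g.
Proof.
apply/ffunP => q; rewrite !ffunE scaler_sumr; apply: eq_bigr => z _.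
by rewrite ffunE -!scalerAl.
Qed.

Lemma tconvZr (a : k) (f g : mat R Y) : conv f (a *: g) = a *: conv f g.
Proof.
apply/ffunP => q; rewrite !ffunE scaler_sumr; apply: eq_bigr => z _.
by rewrite ffunE scalerAr.
Qed.

Lemma tconv_suml (I : Type) (r : seq I) (F : I -> mat R Y) h :
  conv (\sum_(i <- r) F i) h = \sum_(i <- r) conv (F i) h.
Proof. exact: (big_morph (conv^~ h) (fun f g => tconvDl f g h) (tconv0l h)). Qed.

Lemma tconv_sumr (I : Type) (r : seq I) (F : I -> mat R Y) h :
  conv h (\sum_(i <- r) F i) = \sum_(i <- r) conv h (F i).
Proof. exact: (big_morph (conv h) (fun f g => tconvDr f g h) (tconv0r h)). Qed.

Lemma gen_sum (P : mat R Y -> Prop) (I : Type) (r : seq I) (F : I -> mat R Y) :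
  (forall i, gen einv P (F i)) -> gen einv P (\sum_(i <- r) F i).
Proof.
move=> PF; elim: r => [|i r IH]; first by rewrite big_nil; apply: gen_zero.
by rewrite big_cons; apply: gen_add.
Qed.

Variables (Lambda : finType) (lab : Y -> Lambda) (e : Y -> R).
Hypothesis e_inv : forall y, e y * einv y = 1 /\ einv y * e y = 1.

Local Notation one := (oneL lab e).

Definition row_supp (l : Lambda) (f : mat R Y) := forall q, lab q.1 != l -> f q = 0.
Definition col_supp (l : Lambda) (f : mat R Y) := forall q, lab q.2 != l -> f q = 0.

Lemma oneL_tconv l (f : mat R Y) :
  conv (one l) f = [ffun q => if lab q.1 == l then f q else 0].
Proof.
apply/ffunP => -[x y]; rewrite !ffunE /= (bigD1 x) //= ffunE /= eqxx andbT.
rewrite big1 ?addr0 => [|z zx]; last first.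
  by rewrite ffunE /= [x == z]eq_sym (negbTE zx) andbF !mul0r.
by case: eqP => _; rewrite ?mul0r // (proj1 (e_inv x)) mul1r.
Qed.

Lemma tconv_oneL l (f : mat R Y) :
  conv f (one l) = [ffun q => if lab q.2 == l then f q else 0].
Proof.
apply/ffunP => -[x y]; rewrite !ffunE /= (bigD1 y) //= ffunE /= eqxx andbT.
rewrite big1 ?addr0 => [|z zy]; last by rewrite ffunE /= (negbTE zy) andbF !mulr0.
by case: eqP => _; rewrite ?mulr0 // -mulrA (proj2 (e_inv y)) mulr1.
Qed.

Lemma oneL_tconv_supp l0 l f :
  row_supp l0 f -> conv (one l) f = if l == l0 then f else 0.
Proof.
move=> sf; rewrite oneL_tconv; case: eqP => [->|ll0]; apply/ffunP => q; rewrite !ffunE.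
  by case: eqP => // /eqP lq; rewrite sf.
by case: eqP => // lq; rewrite sf // lq; exact/eqP.
Qed.

Lemma tconv_oneL_supp l0 l f :
  col_supp l0 f -> conv f (one l) = if l == l0 then f else 0.
Proof.
move=> sf; rewrite tconv_oneL; case: eqP => [->|ll0]; apply/ffunP => q; rewrite !ffunE.
  by case: eqP => // /eqP lq; rewrite sf.
by case: eqP => // lq; rewrite sf // lq; exact/eqP.
Qed.

Lemma row_supp_oneL l : row_supp l (one l).
Proof. by move=> q /negbTE lq; rewrite ffunE lq. Qed.

Lemma oneL_idem l : conv (one l) (one l) = one l.
Proof. by rewrite (oneL_tconv_supp _ (@row_supp_oneL l)) eqxx. Qed.

Lemma row_supp_tconv l f g : row_supp l f -> row_supp l (conv f g).
Proof. by move=> sf q lq; rewrite ffunE big1 // => z _; rewrite sf // !mul0r. Qed.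

Lemma col_supp_tconv l f g : col_supp l g -> col_supp l (conv f g).
Proof. by move=> sg q lq; rewrite ffunE big1 // => z _; rewrite sg // !mulr0. Qed.

Definition oneA : mat R Y := \sum_l one l.

Lemma tconv1l (f : mat R Y) : conv oneA f = f.
Proof.
apply/ffunP => q; rewrite tconv_suml sum_ffunE.
under eq_bigr do rewrite oneL_tconv ffunE.
by rewrite -big_mkcond (big_pred1 (lab q.1)) // => l; rewrite eq_sym.
Qed.

Lemma tconv1r (f : mat R Y) : conv f oneA = f.
Proof.
apply/ffunP => q; rewrite tconv_sumr sum_ffunE.
under eq_bigr do rewrite tconv_oneL ffunE.
by rewrite -big_mkcond (big_pred1 (lab q.2)) // => l; rewrite eq_sym.
Qed.

Lemma tconv_oneA_split (f g : mat R Y) :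
  conv f g = \sum_n conv (conv f (one n)) (conv (one n) g).
Proof.
rewrite -{1}(tconv1l g) tconv_suml tconv_sumr; apply: eq_bigr => n _.
by rewrite -{1}oneL_idem !tconvA.
Qed.

End TwistedConvolution.

Section DoubleCentralizer.

Variables (k : fieldType) (R : algType k) (gT : finGroupType) (toR : {action gT &-> R}).
Hypothesis toR_add : forall (g : gT) (r s : R), toR (r + s) g = toR r g + toR s g.
Hypothesis toR_mul : forall (g : gT) (r s : R), toR (r * s) g = toR r g * toR s g.
Hypothesis toR_one : forall g : gT, toR 1 g = 1.
Variables (Lambda : finType) (omega : Lambda).
Variables (Y : finType) (toY : {action gT &-> Y}) (lab : Y -> Lambda).
Hypothesis lab_inv : forall (y : Y) (g : gT), lab (toY y g) = lab y.
Variable p : Lambda -> Y -> Y.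
Hypothesis p_lab : forall l x, lab x = omega -> lab (p l x) = l.
Hypothesis p_equiv : forall l x (g : gT), lab x = omega -> p l (toY x g) = toY (p l x) g.
Hypothesis p_omega : forall x, lab x = omega -> p omega x = x.
Variables (e einv : Y -> R).
Hypothesis e_equiv : forall (y : Y) (g : gT), e (toY y g) = toR (e y) g.
Hypothesis e_inv : forall y, e y * einv y = 1 /\ einv y * e y = 1.
Variable T : {pred R}.
Hypothesis star : forall y, exists2 mi : R,
  mfun einv omega lab p e y * mi = 1 /\ mi * mfun einv omega lab p e y = 1
  & mfun einv omega lab p e y \in T /\ mi \in T.

Local Notation conv := (tconv einv).
Local Notation one := (oneL lab e).
Local Notation inX := (inX omega lab).
Local Notation S := (Sg omega lab p e).
Local Notation M := (Mg omega lab p e).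
Local Notation K := (Kg omega lab p e).
Local Notation m := (mfun einv omega lab p e).
Local Notation diag := (tdiag omega lab e).
Local Notation ATt := (AT einv omega lab p e toY toR T).
Local Notation BTt := (BT einv omega lab p e toY toR T).
Local Notation CTt := (CT einv omega lab p e toY toR T).

Lemma row_supp_S l : row_supp lab omega (S l).
Proof. by move=> q lq; rewrite ffunE /Defs.inX (negbTE lq). Qed.

Lemma col_supp_S l : col_supp lab l (S l).
Proof.
move=> q lq; rewrite ffunE /Defs.inX; case: eqP => //= Xq; case: eqP => // pq.
by rewrite -pq p_lab // eqxx in lq.
Qed.

Lemma row_supp_M l : row_supp lab l (M l).
Proof.
move=> q lq; rewrite ffunE /Defs.inX; case: eqP => //= Xq; case: eqP => // pq.
by rewrite pq p_lab // eqxx in lq.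
Qed.

Lemma col_supp_M l : col_supp lab omega (M l).
Proof. by move=> q lq; rewrite ffunE /Defs.inX (negbTE lq). Qed.

Lemma K_omega : K omega = one omega.
Proof.
apply/ffunP => -[x y]; rewrite !ffunE /= /Defs.inX.
have [Xx|//] := eqVneq (lab x) omega.
have [<-|nxy] := eqVneq x y; first by rewrite Xx !eqxx p_omega.
have [Xy|_] := eqVneq (lab y) omega; last by rewrite andbF.
by rewrite !p_omega // (negbTE nxy).
Qed.

Lemma M_omega : M omega = one omega.
Proof.
apply/ffunP => -[x y]; rewrite !ffunE /= /Defs.inX.
have [<-|nxy] := eqVneq x y.
  by have [Xx|//] := eqVneq (lab x) omega; rewrite p_omega // eqxx.
have [Xy|_] := eqVneq (lab y) omega; last by rewrite !andbF.
by rewrite p_omega // (negbTE nxy) !andbF.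
Qed.

Lemma S_omega : S omega = one omega.
Proof.
apply/ffunP => -[x y]; rewrite !ffunE /= /Defs.inX.
by have [Xx|//] := eqVneq (lab x) omega; rewrite p_omega //; case: eqP => // <-.
Qed.

Lemma tconv_SM l : conv (S l) (M l) = K l.
Proof.
apply/ffunP => -[x y]; rewrite !ffunE /= (bigD1 (p l x)) //= big1 ?addr0.
  rewrite !ffunE /= eqxx andbT.
  case: (inX x); case: (inX y); case: eqP => //= _;
    by rewrite ?mul0r ?mulr0 // (proj1 (e_inv _)) mul1r.
by move=> z zx; rewrite ffunE /= [p l x == z]eq_sym (negbTE zx) andbF !mul0r.
Qed.

Lemma BT_supp f : BTt f -> row_supp lab omega f /\ col_supp lab omega f.
Proof.
elim=> {f} [f [[l ->]|[t _ ->]]||||].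
- by split=> q lq; rewrite ffunE /Defs.inX (negbTE lq) ?andbF.
- split=> q lq; rewrite ffunE /Defs.inX; first by rewrite (negbTE lq).
  by case: eqP => //= Xq; case: eqP => // qq; rewrite -qq Xq eqxx in lq.
- by split=> q _; rewrite ffunE.
- move=> f g _ [rf cf] _ [rg cg].
  by split=> q lq; rewrite ffunE; [rewrite rf ?rg | rewrite cf ?cg]; rewrite ?addr0.
- by move=> a f _ [rf cf]; split=> q lq; rewrite ffunE; [rewrite rf | rewrite cf]; rewrite ?scaler0.
- by move=> f g _ [rf _] _ [_ cg]; split; [apply: row_supp_tconv | apply: col_supp_tconv].
Qed.

Lemma BT_oneLl f : BTt f -> conv (one omega) f = f.
Proof. by case/BT_supp => rf _; rewrite (oneL_tconv_supp e_inv _ rf) eqxx. Qed.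

Lemma BT_oneLr f : BTt f -> conv f (one omega) = f.
Proof. by case/BT_supp => _ cf; rewrite (tconv_oneL_supp e_inv _ cf) eqxx. Qed.

Lemma BT_K l : BTt (K l).
Proof. by apply: gen_base; left; exists l. Qed.

Lemma BT_oneL : BTt (one omega).
Proof. by rewrite -K_omega; apply: BT_K. Qed.

Lemma BT_AT f : BTt f -> ATt f.
Proof. by move=> Bf; apply: gen_base; left. Qed.

Lemma AT_S l : ATt (S l).
Proof. by apply: gen_base; right; left; exists l. Qed.

Lemma AT_M l : ATt (M l).
Proof. by apply: gen_base; right; right; exists l. Qed.

Definition corner_MBS (a : mat R Y) l l' :=
  exists2 b, BTt b & conv (conv (one l) a) (one l') = conv (conv (M l) b) (S l').

Lemma corner_MBS_sum l l' (I : Type) (r : seq I) (F : I -> mat R Y) :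
  (forall i, exists2 b, BTt b & F i = conv (conv (M l) b) (S l')) ->
  exists2 b, BTt b & \sum_(i <- r) F i = conv (conv (M l) b) (S l').
Proof.
move=> FP; elim: r => [|i r [b Bb Eb]].
  by exists 0; [apply: gen_zero | rewrite big_nil tconv0r tconv0l].
have [b' Bb' Eb'] := FP i; exists (b' + b); first exact: gen_add.
by rewrite big_cons Eb Eb' -tconvDl -tconvDr.
Qed.

Lemma corner_MBS_supp f l0 l0' b :
  row_supp lab l0 f -> col_supp lab l0' f -> BTt b ->
  f = conv (conv (M l0) b) (S l0') -> forall l l', corner_MBS f l l'.
Proof.
move=> rf cf Bb fE l l'; rewrite /corner_MBS (oneL_tconv_supp e_inv _ rf).
have [->|_] := eqVneq l l0; last first.
  by exists 0; [apply: gen_zero | rewrite tconv0l !tconv0r tconv0l].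
rewrite (tconv_oneL_supp e_inv _ cf); have [->|_] := eqVneq l' l0'; first by exists b.
by exists 0; [apply: gen_zero | rewrite tconv0r tconv0l].
Qed.

Lemma AT_corner_MBS a : ATt a -> forall l l', corner_MBS a l l'.
Proof.
elim=> {a} [f [Bf|[[l0 ->]|[l0 ->]]]||||].
- have [rf cf] := BT_supp Bf; apply: (corner_MBS_supp rf cf Bf).
  by rewrite M_omega S_omega BT_oneLl ?BT_oneLr.
- apply: (corner_MBS_supp (@row_supp_S l0) (@col_supp_S l0) BT_oneL).
  by rewrite M_omega (oneL_idem lab e_inv) (oneL_tconv_supp e_inv _ (@row_supp_S l0)) eqxx.
- apply: (corner_MBS_supp (@row_supp_M l0) (@col_supp_M l0) BT_oneL).
  by rewrite S_omega tconvA (oneL_idem lab e_inv) (tconv_oneL_supp e_inv _ (@col_supp_M l0)) eqxx.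
- by move=> l l'; exists 0; [apply: gen_zero | rewrite !tconv0r !tconv0l].
- move=> f g _ IHf _ IHg l l'.
  have [[bf Bf Ef] [bg Bg Eg]] := (IHf l l', IHg l l').
  exists (bf + bg); first exact: gen_add.
  by rewrite tconvDr tconvDl Ef Eg -tconvDl -tconvDr.
- move=> c f _ IHf l l'; have [b Bb Eb] := IHf l l'.
  exists (c *: b); first exact: gen_scale.
  by rewrite tconvZr tconvZl Eb tconvZr tconvZl.
- move=> f g _ IHf _ IHg l l'.
  rewrite /corner_MBS (tconv_oneA_split lab e_inv f g) tconv_sumr tconv_suml.
  apply: corner_MBS_sum => n; have [[bf Bf Ef] [bg Bg Eg]] := (IHf l n, IHg n l').
  exists (conv (conv bf (K n)) bg); first by do 2!apply: gen_mul => //; apply: BT_K.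
  have -> : conv (conv (one l) (conv (conv f (one n)) (conv (one n) g))) (one l') =
            conv (conv (conv (one l) f) (one n)) (conv (conv (one n) g) (one l')).
    by rewrite !tconvA.
  by rewrite Ef Eg -tconv_SM !tconvA.
Qed.

Lemma BT_corner a : ATt a -> BTt (conv (conv (one omega) a) (one omega)).
Proof.
move/AT_corner_MBS/(_ omega omega) => [b Bb ->].
by rewrite M_omega S_omega BT_oneLl ?BT_oneLr.
Qed.

Lemma toR0 g : toR 0 g = 0.
Proof. by apply/(addrI (toR 0 g)); rewrite -toR_add !addr0. Qed.

Lemma toR_sum g (I : Type) (r : seq I) (P : pred I) (F : I -> R) :
  toR (\sum_(i <- r | P i) F i) g = \sum_(i <- r | P i) toR (F i) g.
Proof. exact: (big_morph (toR^~ g) (toR_add g) (toR0 g)). Qed.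

Lemma einv_equiv y g : einv (toY y g) = toR (einv y) g.
Proof.
have [_ eVy] := e_inv (toY y g); have [ey _] := e_inv y.
by rewrite -[LHS]mulr1 -(toR_one g) -ey toR_mul mulrA -e_equiv eVy mul1r.
Qed.

Lemma m_equiv y g : m (toY y g) = toR (m y) g.
Proof.
rewrite /mfun lab_inv toR_sum (reindex_inj (act_inj toY g)) /=.
apply: eq_big => [x|x _]; last by rewrite einv_equiv e_equiv toR_mul.
rewrite /Defs.inX lab_inv; case: eqP => //= Xx.
by rewrite p_equiv // (inj_eq (act_inj toY g)).
Qed.

Lemma m_unit_in_T y : exists mi, [&& m y * mi == 1, mi * m y == 1 & mi \in T].
Proof. by have [mi [mmi mim] [_ Tmi]] := star y; exists mi; rewrite mmi mim Tmi !eqxx. Qed.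

Definition minv y := xchoose (m_unit_in_T y).

Lemma minvP y : [/\ m y * minv y = 1, minv y * m y = 1 & minv y \in T].
Proof. by have /and3P[/eqP ? /eqP ? ?] := xchooseP (m_unit_in_T y). Qed.

Lemma minv_equiv y g : minv (toY y g) = toR (minv y) g.
Proof.
have [mminv _ _] := minvP (toY y g); have [_ minvm _] := minvP y.
by rewrite -[RHS]mulr1 -mminv mulrA m_equiv -toR_mul minvm toR_one mul1r.
Qed.

Definition Dg l := diag (fun x => minv (p l x)).

Lemma BT_D l : BTt (Dg l).
Proof.
apply: gen_base; right; exists (fun x => minv (p l x)) => //.
split=> [x _ | g x /eqP Xx]; first by have [] := minvP (p l x).
by rewrite p_equiv // minv_equiv.
Qed.

Lemma tconv_M_diag l t : conv (M l) (diag t) =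
  [ffun q => if inX q.2 && (q.1 == p l q.2) then e q.1 * t q.2 else 0].
Proof.
apply/ffunP => -[y x]; rewrite !ffunE /= (bigD1 x) //= big1 ?addr0.
  rewrite !ffunE /= eqxx andbT.
  case: (inX x); case: (y == p l x) => /=; rewrite ?mul0r ?mulr0 //.
  by rewrite mulrA -(mulrA (e y)) (proj2 (e_inv x)) mulr1.
by move=> z zx; rewrite !ffunE /= (negbTE zx) andbF mulr0.
Qed.

(* At (y, y) the convolution sums e(x)^-1 e(y) over the fibre p_l^-1(y),
   i.e. it equals e(y) m(y)^-1 m(y). *)
Lemma oneL_MDS l : one l = conv (conv (M l) (Dg l)) (S l).
Proof.
apply/ffunP => -[y y']; rewrite tconv_M_diag !ffunE /=.
rewrite (eq_bigr (fun x => if inX x && (p l x == y) then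
   (if y == y' then e y * minv y * (einv x * e y) else 0) else 0)); last first.
  move=> x _; rewrite !ffunE /=; case Xx: (inX x) => /=; rewrite ?mul0r //.
  have [->|_] := eqVneq y (p l x); first by case: eqP => [<-|_]; rewrite ?mulr0 // !mulrA.
  by rewrite !mul0r.
rewrite -big_mkcond /=; have [_|_] := eqVneq y y'; last by rewrite andbF big1.
rewrite andbT; case: (lab y =P l) => [ly|nly]; last first.
  by rewrite big1 // => x /andP[Xx /eqP pxy]; case: nly; rewrite -pxy p_lab //; exact/eqP.
rewrite -big_distrr /= -ly -/(m y); have [_ minvm _] := minvP y.
by rewrite -mulrA minvm mulr1.
Qed.

Lemma AT_oneL : ATt (one omega).
Proof. exact: BT_AT BT_oneL. Qed.

Lemma CT_AT c : CTt c -> ATt c.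
Proof. by case=> a Aa ->; apply: gen_mul => //; apply: AT_oneL. Qed.

Lemma CT_oneLr c : CTt c -> conv c (one omega) = c.
Proof. by case=> a _ ->; rewrite tconvA (oneL_idem lab e_inv). Qed.

Lemma CT_of_AT c : ATt c -> conv c (one omega) = c -> CTt c.
Proof. by move=> Ac cE; exists c. Qed.

Lemma CT_oneL : CTt (one omega).
Proof. exact: CT_of_AT AT_oneL (oneL_idem lab e_inv omega). Qed.

Lemma CT_M l : CTt (M l).
Proof. by apply: CT_of_AT (AT_M l) _; rewrite (tconv_oneL_supp e_inv _ (@col_supp_M l)) eqxx. Qed.

Lemma CT0 : CTt 0.
Proof. by apply: CT_of_AT (gen_zero _ _) _; rewrite tconv0l. Qed.

Lemma CTD c c' : CTt c -> CTt c' -> CTt (c + c').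
Proof.
move=> Cc Cc'; apply: CT_of_AT; first by apply: gen_add; apply: CT_AT.
by rewrite tconvDl !CT_oneLr.
Qed.

Lemma CT_tconvB c b : CTt c -> BTt b -> CTt (conv c b).
Proof.
move=> Cc Bb; apply: CT_of_AT; first by apply: gen_mul; [apply: CT_AT | apply: BT_AT].
by rewrite tconvA BT_oneLr.
Qed.

Lemma CT_tconvA a c : ATt a -> CTt c -> CTt (conv a c).
Proof.
move=> Aa Cc; apply: CT_of_AT; first by apply: gen_mul => //; apply: CT_AT.
by rewrite tconvA CT_oneLr.
Qed.

Lemma BT_DS_CT l c : CTt c -> BTt (conv (Dg l) (conv (S l) c)).
Proof.
move=> Cc; apply: gen_mul; first exact: BT_D.
have := BT_corner (gen_mul (AT_S l) (CT_AT Cc)).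
by rewrite -tconvA (oneL_tconv_supp e_inv _ (row_supp_S l)) eqxx tconvA CT_oneLr.
Qed.

Lemma MDS_decomp c : c = \sum_l conv (M l) (conv (Dg l) (conv (S l) c)).
Proof.
rewrite -{1}(tconv1l lab e_inv c) tconv_suml; apply: eq_bigr => l _.
by rewrite oneL_MDS !tconvA.
Qed.

Lemma endA_CT_tconvB (phi : mat R Y -> mat R Y) :
  (forall c, CTt c -> CTt (phi c)) ->
  (forall a c, ATt a -> CTt c -> phi (conv a c) = conv a (phi c)) ->
  exists2 b, BTt b & forall c, CTt c -> phi c = conv c b.
Proof.
move=> phiC phiA; exists (phi (one omega)).
  have := phiA _ _ AT_oneL CT_oneL; rewrite (oneL_idem lab e_inv) => phi1.
  by have := BT_corner (CT_AT (phiC _ CT_oneL)); rewrite -phi1 (CT_oneLr (phiC _ CT_oneL)).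
by move=> c Cc; rewrite -{1}(CT_oneLr Cc) phiA //; [apply: CT_AT | apply: CT_oneL].
Qed.

Lemma endB_CT_tconvA (phi : mat R Y -> mat R Y) :
  (forall c, CTt c -> CTt (phi c)) ->
  (forall c c', CTt c -> CTt c' -> phi (c + c') = phi c + phi c') ->
  (forall b c, BTt b -> CTt c -> phi (conv c b) = conv (phi c) b) ->
  exists2 a, ATt a & forall c, CTt c -> phi c = conv a c.
Proof.
move=> phiC phiD phiB.
exists (\sum_l conv (conv (phi (M l)) (Dg l)) (S l)).
  apply: gen_sum => l; apply: gen_mul; last exact: AT_S.
  by apply: gen_mul; [apply: CT_AT (phiC _ (CT_M l)) | apply: BT_AT (BT_D l)].
move=> c Cc; have CMDS l : CTt (conv (M l) (conv (Dg l) (conv (S l) c))).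
  by apply: CT_tconvB; [apply: CT_M | apply: BT_DS_CT].
rewrite {1}(MDS_decomp c) (additive_on_sum CT0 CTD phiD _ CMDS).2 tconv_suml.
by apply: eq_bigr => l _; rewrite (phiB _ _ (BT_DS_CT l Cc) (CT_M l)) !tconvA.
Qed.

Lemma BT_unique b b' :
  BTt b -> BTt b' -> (forall c, CTt c -> conv c b = conv c b') -> b = b'.
Proof. by move=> Bb Bb' bb'; rewrite -(BT_oneLl Bb) -(BT_oneLl Bb') (bb' _ CT_oneL). Qed.

Lemma AT_unique a a' : (forall c, CTt c -> conv a c = conv a' c) -> a = a'.
Proof.
move=> aa'; rewrite -(tconv1r lab e_inv a) -(tconv1r lab e_inv a') !tconv_sumr.
by apply: eq_bigr => l _; rewrite oneL_MDS -!tconvA (aa' _ (CT_M l)).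
Qed.

Lemma BT_cornerP b :
  BTt b <-> exists2 a, ATt a & b = conv (conv (one omega) a) (one omega).
Proof.
split=> [Bb | [a Aa ->]]; last exact: BT_corner.
by exists b; [apply: BT_AT | rewrite (BT_oneLl Bb) (BT_oneLr Bb)].
Qed.

End DoubleCentralizer.

Theorem theorem4
  (* the field k and the k-algebra R (free over k, automatic over a field) *)
  (k : fieldType) (R : algType k)
  (* the finite group G, acting on R by k-algebra automorphisms *)
  (gT : finGroupType) (toR : {action gT &-> R})
  (toR_add : forall (g : gT) (r s : R), toR (r + s) g = toR r g + toR s g)
  (toR_scale : forall (g : gT) (a : k) (r : R), toR (a *: r) g = a *: toR r g)
  (toR_mul : forall (g : gT) (r s : R), toR (r * s) g = toR r g * toR s g)
  (toR_one : forall g : gT, toR 1 g = 1)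
  (* Y = disjoint union of the finite G-sets Y_l, l in (Lambda, omega) *)
  (Lambda : finType) (omega : Lambda)
  (Y : finType) (toY : {action gT &-> Y}) (lab : Y -> Lambda)
  (lab_inv : forall (y : Y) (g : gT), lab (toY y g) = lab y)
  (* the G-equivariant surjections p_l : X = Y_omega -> Y_l, p_omega = id *)
  (p : Lambda -> Y -> Y)
  (p_lab : forall l x, lab x = omega -> lab (p l x) = l)
  (p_surj : forall l y, lab y = l -> exists2 x, lab x = omega & p l x = y)
  (p_equiv : forall l x (g : gT), lab x = omega -> p l (toY x g) = toY (p l x) g)
  (p_omega : forall x, lab x = omega -> p omega x = x)
  (* the twist e in R_G(Y), with pointwise inverse einv *)
  (e einv : Y -> R)
  (e_equiv : forall (y : Y) (g : gT), e (toY y g) = toR (e y) g)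
  (e_inv : forall y, e y * einv y = 1 /\ einv y * e y = 1)
  (* the G-stable subring T of R *)
  (T : {pred R}) (T_subring : GRing.subring_closed T)
  (T_stable : forall (g : gT) (r : R), r \in T -> toR r g \in T)
  (* condition (star) *)
  (star : forall y, exists2 mi : R,
            mfun einv omega lab p e y * mi = 1 /\ mi * mfun einv omega lab p e y = 1
          & mfun einv omega lab p e y \in T /\ mi \in T) :
  let conv := tconv einv in
  let AT' := AT einv omega lab p e toY toR T in
  let BT' := BT einv omega lab p e toY toR T in
  let CT' := CT einv omega lab p e toY toR T in
  (* B^T acts on C^T on the right, by A^T-linear maps *)
  (forall b c, BT' b -> CT' c ->
     CT' (conv c b) /\ forall a, AT' a -> conv a (conv c b) = conv (conv a c) b) /\
  (* A^T acts on C^T on the left, by B^T-linear maps *)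
  (forall a c, AT' a -> CT' c ->
     CT' (conv a c) /\ forall b, BT' b -> conv (conv a c) b = conv a (conv c b)) /\
  (* End_{A^T}(C^T) = B^T : every A^T-endomorphism is right convolution by some b *)
  (forall phi : mat R Y -> mat R Y,
     (forall c, CT' c -> CT' (phi c)) ->
     (forall c c', CT' c -> CT' c' -> phi (c + c') = phi c + phi c') ->
     (forall a c, AT' a -> CT' c -> phi (conv a c) = conv a (phi c)) ->
     exists2 b, BT' b & forall c, CT' c -> phi c = conv c b) /\
  (forall b b', BT' b -> BT' b' -> (forall c, CT' c -> conv c b = conv c b') -> b = b') /\
  (* End_{B^T}(C^T) = A^T : every B^T-endomorphism is left convolution by some a *)
  (forall phi : mat R Y -> mat R Y,
     (forall c, CT' c -> CT' (phi c)) ->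
     (forall c c', CT' c -> CT' c' -> phi (c + c') = phi c + phi c') ->
     (forall b c, BT' b -> CT' c -> phi (conv c b) = conv (phi c) b) ->
     exists2 a, AT' a & forall c, CT' c -> phi c = conv a c) /\
  (forall a a', AT' a -> AT' a' -> (forall c, CT' c -> conv a c = conv a' c) -> a = a') /\
  (* B^T = 1_omega * A^T * 1_omega *)
  (forall b, BT' b <->
     exists2 a, AT' a & b = conv (conv (oneL lab e omega) a) (oneL lab e omega)).
Proof.
move=> conv AT' BT' CT'; subst conv AT' BT' CT'.
split; [|split; [|split; [|split; [|split; [|split]]]]].
- by move=> b c Bb Cc; split=> [|a _]; [apply: CT_tconvB | rewrite tconvA].
- by move=> a c Aa Cc; split=> [|b _]; [apply: CT_tconvA | rewrite tconvA].
- by move=> phi phiC _ phiA; apply: endA_CT_tconvB.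
- exact: BT_unique.
- by move=> phi phiC phiD phiB; apply: endB_CT_tconvA.
- by move=> a a' _ _; apply: AT_unique.
- exact: BT_cornerP.
Qed.
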